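(* Let $0<q<1$ and $q^*=2-q$. Let $X_1,X_2,\dots,X_n$ be positive i.i.d. random variables. Then for all $x>0$ and all $a>0$, $$\mathrm{Prob}\left(\frac1n\sum_{k=1}^nX_k\ge x\right)\le\exp_{q^*}(-anx)\,A^n(a),\qquad A(a)=\mathbb{E}\exp_q(aX_1).$$
   Context: For $q\in(0,2)$, $q\ne1$, the $q$-deformed exponential is $\exp_q(u)=[1+(1-q)u]_+^{1/(1-q)}$ for real $u$ (value in $[0,+\infty]$), where $[u]_+=\max(u,0)$. *)

From HB Require Import structures.
From mathcomp Require Import all_boot all_order all_algebra.
From mathcomp Require Import all_classical all_reals all_analysis.
Set Implicit Arguments. Unset Strict Implicit. Unset Printing Implicit Defensive.
Import Order.TTheory GRing.Theory Num.Theory.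
Local Open Scope classical_set_scope.
Local Open Scope ring_scope.

(* When the base [1+(1-q)u]_+ is 0, the value is 0 if the
   exponent 1/(1-q) is positive and +oo if it is negative. *)
Definition expq (R : realType) (q u : R) : \bar R :=
  let b := 1 + (1 - q) * u in
  if 0 < b then (b `^ (1 - q)^-1)%:E
  else if 0 < (1 - q)^-1 then 0%E else +oo%E.

Definition mutually_independent d (T : measurableType d) (R : realType)
  (P : probability T R) (n : nat) (X : nat -> {RV P >-> R}) : Prop :=
  forall (J : {set 'I_n}) (B : 'I_n -> set R),
    (forall j, measurable (B j)) ->
    P (\bigcap_(j in [set j | j \in J]) (X (val j) @^-1` B j)) =
    (\prod_(j in J) P (X (val j) @^-1` B j))%E.

Definition identically_distributed d (T : measurableType d) (R : realType)
  (P : probability T R) (n : nat) (X : nat -> {RV P >-> R}) : Prop :=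
  forall (i j : 'I_n) (B : set R), measurable B ->
    P (X (val i) @^-1` B) = P (X (val j) @^-1` B).

From HB Require Import structures.
From mathcomp Require Import all_boot all_order all_algebra.
From mathcomp Require Import all_classical all_reals all_analysis.
From mathcomp Require Import measurable_realfun.
From mathcomp Require Import ring lra.
Set Implicit Arguments. Unset Strict Implicit. Unset Printing Implicit Defensive.
Import Order.TTheory GRing.Theory Num.Theory.
Local Open Scope classical_set_scope.
Local Open Scope ring_scope.

(* For u >= 0 and q < 1 we have exp_q(u) = e(u) := (1 + (1-q) u)^(1/(1-q)) and
   exp_(2-q)(-u) = 1/e(u).  The function e is nondecreasing and submultiplicative,
   e(u + v) <= e(u) e(v), so on the event {X_1 + ... + X_n >= n x} we get
   e(a n x) <= e(a (X_1 + ... + X_n)) <= prod_k e(a X_k) (a Chernoff-type bound),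
   and independence turns the expectation of the product into A(a)^n.
   Independence is only available for events, so e(a X_k) is first replaced by
   a staircase function of mesh δ lying below it, i.e. a nonnegative combination
   of indicators of the events {X_k >= i δ}, for which the expectation of the
   product factorises.  This costs a factor e(a n δ), which tends to 1 with δ. *)

Section q_exponential.
Variables (R : realType) (q : R).
Hypothesis q_lt1 : q < 1.

Definition qexp (u : R) : R := (1 + (1 - q) * u) `^ (1 - q)^-1.

Lemma qexp_ge0 u : 0 <= qexp u.
Proof. exact: powR_ge0. Qed.

Lemma qexp0 : qexp 0 = 1.
Proof. by rewrite /qexp mulr0 addr0 powR1. Qed.

Let qexp_base_ge1 {u} : 0 <= u -> 1 <= 1 + (1 - q) * u.
Proof. by move=> u0; rewrite lerDl mulr_ge0 // subr_ge0 ltW. Qed.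

Lemma qexp_le u v : 0 <= u -> u <= v -> qexp u <= qexp v.
Proof.
move=> u0 uv; have bu := qexp_base_ge1 u0.
have bv := qexp_base_ge1 (le_trans u0 uv).
apply: ge0_ler_powR; rewrite ?nnegrE ?invr_ge0 ?subr_ge0 ?(ltW q_lt1) //; [lra|lra|].
by rewrite lerD2l ler_wpM2l // subr_ge0 ltW.
Qed.

Lemma qexp_ge1 u : 0 <= u -> 1 <= qexp u.
Proof. by move=> u0; rewrite -qexp0 qexp_le. Qed.

Lemma qexpD_le u v : 0 <= u -> 0 <= v -> qexp (u + v) <= qexp u * qexp v.
Proof.
move=> u0 v0; have bu := qexp_base_ge1 u0; have bv := qexp_base_ge1 v0.
have buv := qexp_base_ge1 (addr_ge0 u0 v0).
rewrite /qexp -powRM; [|lra|lra].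
apply: ge0_ler_powR; rewrite ?nnegrE ?invr_ge0 ?subr_ge0 ?(ltW q_lt1) //; [lra|nra|].
have : 0 <= (1 - q) * u * ((1 - q) * v) by rewrite !mulr_ge0 // subr_ge0 ltW.
rewrite mulrDl !mulrDr mul1r mulr1; lra.
Qed.

Lemma qexp_sum_le (I : Type) (s : seq I) (u : I -> R) :
  (forall i, 0 <= u i) -> qexp (\sum_(i <- s) u i) <= \prod_(i <- s) qexp (u i).
Proof.
move=> u0; elim: s => [|i s IH]; first by rewrite !big_nil qexp0.
rewrite !big_cons; apply: le_trans (qexpD_le (u0 i) (sumr_ge0 _ (fun j _ => u0 j))) _.
by rewrite ler_wpM2l ?qexp_ge0.
Qed.

Lemma qexp_onto_gt1 e : 1 < e -> exists2 u, 0 < u & qexp u = e.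
Proof.
move=> e_gt1; have q1 : 0 < 1 - q by rewrite subr_gt0.
have ep_gt1 : 1 < e `^ (1 - q).
  have one_pow : (1 : R) = 1 `^ (1 - q) by rewrite powR1.
  by rewrite {1}one_pow gt0_ltr_powR // nnegrE; lra.
exists ((e `^ (1 - q) - 1) / (1 - q)); first by rewrite divr_gt0 // subr_gt0.
rewrite /qexp mulrC divfK ?gt_eqF // addrC subrK -powRrM mulfV ?gt_eqF //.
by rewrite powRr1 //; lra.
Qed.

Lemma mulr_qexp_le_shift (p B u : R) : 0 <= p -> 0 <= B -> 0 < u ->
  (forall v, 0 < v -> v <= u -> p * qexp (u - v) <= B) -> p * qexp u <= B.
Proof.
move=> p0 B0 u0 shift; apply/ler_addgt0Pr => e e0.
have e'_gt1 : 1 < 1 + e / (B + 1) by rewrite ltrDl divr_gt0 //; lra.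
have [v0 v0_gt0 qexp_v0] := qexp_onto_gt1 e'_gt1.
pose v := Num.min u v0.
have v_gt0 : 0 < v by rewrite lt_min u0.
have vu : v <= u by rewrite /v ge_min lexx.
have qexp_v : qexp v <= 1 + e / (B + 1).
  by rewrite -qexp_v0 qexp_le ?(ltW v_gt0) // /v ge_min lexx orbT.
have split_u : qexp u <= qexp (u - v) * qexp v.
  by rewrite -{1}(subrK v u) qexpD_le ?subr_ge0 ?(ltW v_gt0).
apply: (@le_trans _ _ (B * (1 + e / (B + 1)))).
  apply: (le_trans (ler_wpM2l p0 split_u)); rewrite mulrA.
  apply: (@le_trans _ _ (B * qexp v)); first by rewrite ler_wpM2r ?qexp_ge0 ?shift.
  by rewrite ler_wpM2l.
have : B * (e / (B + 1)) <= e.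
  by rewrite mulrA ler_pdivrMr; [rewrite mulrC ler_wpM2l; lra | lra].
lra.
Qed.

Lemma expqE u : 0 <= u -> expq q u = (qexp u)%:E.
Proof.
move=> u0; rewrite /expq /= ifT //.
exact: lt_le_trans ltr01 (qexp_base_ge1 u0).
Qed.

Lemma expq_dualE u : 0 <= u -> expq (2 - q) (- u) = ((qexp u)^-1)%:E.
Proof.
move=> u0; rewrite /expq /=.
have -> : 1 + (1 - (2 - q)) * - u = 1 + (1 - q) * u by ring.
rewrite ifT; last exact: lt_le_trans ltr01 (qexp_base_ge1 u0).
have -> : 1 - (2 - q) = - (1 - q) by ring.
by rewrite invrN powRN.
Qed.

End q_exponential.

Section staircase.
Variables (R : realType) (δ : R) (N : nat).
Hypothesis δ_gt0 : 0 < δ.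

Definition stair (y : R) : R := (minn N (Num.truncn (y / δ)))%:R * δ.

Lemma stair_ge0 y : 0 <= stair y.
Proof. by rewrite mulr_ge0 // ltW. Qed.

Lemma stair_le y : 0 <= y -> stair y <= y.
Proof.
move=> y0; apply: (@le_trans _ _ ((Num.truncn (y / δ))%:R * δ)).
  by rewrite ler_wpM2r ?(ltW δ_gt0) // ler_nat geq_minr.
by rewrite -ler_pdivlMr // truncn_le divr_ge0 // ltW.
Qed.

(* Either some [Y k] is cut off at [N δ], which already exceeds [s], or every
   [stair (Y k)] is within [δ] of [Y k]. *)
Lemma sum_stair_ge (n : nat) (Y : 'I_n -> R) (s : R) :
  (forall k, 0 <= Y k) -> s < N%:R * δ -> s <= \sum_(k < n) Y k ->
  s - n%:R * δ <= \sum_(k < n) stair (Y k).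
Proof.
move=> Y0 sN sY.
have nδ0 : 0 <= n%:R * δ by rewrite mulr_ge0 // ltW.
have [[k Nk]|Nlt] := pselect (exists k, (N <= Num.truncn (Y k / δ))%N).
  rewrite (bigD1 k) //=.
  have -> : stair (Y k) = N%:R * δ by rewrite /stair (minn_idPl Nk).
  have : 0 <= \sum_(j < n | j != k) stair (Y j) by apply: sumr_ge0 => j _; exact: stair_ge0.
  lra.
have stairY k : Y k - δ <= stair (Y k).
  have kN : (Num.truncn (Y k / δ) < N)%N.
    by rewrite ltnNge; apply/negP => Nk; apply: Nlt; exists k.
  rewrite /stair (minn_idPr (ltnW kN)).
  have := truncnS_gt (Y k / δ); rewrite ltr_pdivrMr // -natr1 mulrDl mul1r; lra.
apply: le_trans (ler_sum _ (fun k _ => stairY k)).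
rewrite sumrB sumr_const card_ord -mulr_natl; lra.
Qed.

Definition stair_incr (f : R -> R) (i : nat) : R :=
  f (i%:R * δ) - (if i is j.+1 then f (j%:R * δ) else 0).

Lemma stair_incr_ge0 (f : R -> R) i :
  (forall u v, 0 <= u -> u <= v -> f u <= f v) -> 0 <= f 0 -> 0 <= stair_incr f i.
Proof.
move=> f_mono f0; case: i => [|i]; first by rewrite /stair_incr mul0r subr0.
rewrite /stair_incr subr_ge0 f_mono ?mulr_ge0 ?(ltW δ_gt0) //.
by rewrite ler_wpM2r ?(ltW δ_gt0) // ler_nat.
Qed.

Lemma sum_stair_incr (f : R -> R) m : \sum_(i < m.+1) stair_incr f i = f (m%:R * δ).
Proof.
elim: m => [|m IH]; first by rewrite big_ord1 /stair_incr subr0.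
by rewrite big_ord_recr /= IH /stair_incr addrC subrK.
Qed.

Lemma stair_indicE (f : R -> R) y : 0 <= y ->
  f (stair y) = \sum_(i < N.+1) stair_incr f i * \1_[set z | i%:R * δ <= z] y.
Proof.
move=> y0; set J := minn N (Num.truncn (y / δ)).
have indicJ (i : 'I_N.+1) : \1_[set z | i%:R * δ <= z] y = (i <= J)%N%:R :> R.
  rewrite indicE /J leq_min -ltnS ltn_ord /= truncn_ge_nat ?divr_ge0 ?(ltW δ_gt0) //.
  rewrite ler_pdivlMr // (_ : y \in _ = (i%:R * δ <= y)) //.
  by apply/idP/idP => [/set_mem|/mem_set].
rewrite (eq_bigr (fun i : 'I_N.+1 => if (i < J.+1)%N then stair_incr f i else 0)).
  by rewrite -big_mkcond -(big_ord_widen _ (stair_incr f)) ?ltnS ?geq_minl // sum_stair_incr.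
by move=> i _; rewrite indicJ ltnS; case: (_ <= _)%N; rewrite ?mulr1 ?mulr0.
Qed.

End staircase.

Lemma qexp_le_prod_stair (R : realType) (q a δ s : R) (n N : nat) (Y : 'I_n -> R) :
  q < 1 -> 0 < a -> 0 < δ -> n%:R * δ <= s -> s < N%:R * δ ->
  (forall k, 0 <= Y k) -> s <= \sum_(k < n) Y k ->
  qexp q (a * (s - n%:R * δ)) <= \prod_(k < n) qexp q (a * stair δ N (Y k)).
Proof.
move=> q_lt1 a0 δ0 nδs sN Y0 sY.
apply: le_trans (qexp_sum_le q_lt1 _ _); last first.
  by move=> k; rewrite mulr_ge0 ?stair_ge0 // ltW.
rewrite -mulr_sumr qexp_le // ?mulr_ge0 ?subr_ge0 ?(ltW a0) //.
by rewrite ler_wpM2l ?(ltW a0) // sum_stair_ge.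
Qed.

Lemma prodr_indic (T : Type) (R : comPzRingType) (n : nat) (B : 'I_n -> set T) (t : T) :
  \prod_(k < n) (\1_(B k) t : R) =
  \1_(\bigcap_(k in [set k | k \in [set: 'I_n]%SET]) B k) t.
Proof.
have [Bt|] := pselect (forall k, B k t).
  rewrite indicE mem_set; last by move=> k _; exact: Bt.
  by rewrite big1 // => k _; rewrite indicE mem_set.
move/existsNP => [k Bkt].
rewrite (bigD1 k) //= [X in X * _]indicE memNset // mul0r indicE memNset //.
by move=> Bt; apply: Bkt; apply: Bt; rewrite /= inE.
Qed.

Lemma leeXn2r (R : realDomainType) (x y : \bar R) n :
  (0 <= x)%E -> (x <= y)%E -> (x ^+ n <= y ^+ n)%E.
Proof.
move=> x0 xy; elim: n => [|n IH]; first by rewrite !expe0.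
by rewrite !expeS lee_pmul // expe_ge0.
Qed.

Lemma measurable_ge (R : realType) (c : R) : measurable [set z : R | c <= z].
Proof.
have -> : [set z : R | c <= z] = [set` `[c, +oo[].
  by apply/seteqP; split => z /=; rewrite in_itv /= andbT.
exact: measurable_itv.
Qed.

Section integral_indic_sum.
Context d (T : measurableType d) (R : realType) (mu : {measure set T -> \bar R}).

Lemma ge0_integralZ_indic (c : R) (C : set T) : 0 <= c -> measurable C ->
  (\int[mu]_t (c * \1_C t)%:E = c%:E * mu C)%E.
Proof.
move=> c0 mC; rewrite (eq_integral (fun t => c%:E * (\1_C t)%:E))%E; last first.
  by move=> t _; rewrite EFinM.
rewrite ge0_integralZl_EFin //; first by rewrite integral_indic // setIT.
by apply/measurable_EFinP; exact: measurable_indic.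
Qed.

Lemma ge0_integral_sum_indic (I : Type) (s : seq I) (w : I -> R) (C : I -> set T) :
  (forall i, 0 <= w i) -> (forall i, measurable (C i)) ->
  (\int[mu]_t (\sum_(i <- s) w i * \1_(C i) t)%:E = \sum_(i <- s) (w i)%:E * mu (C i))%E.
Proof.
move=> w0 mC; under eq_integral do rewrite -sumEFin.
rewrite ge0_integral_sum => [|//|i|i t _].
- by apply: eq_bigr => i _; rewrite ge0_integralZ_indic.
- apply/measurable_EFinP; apply: measurable_funM; first exact: measurable_cst.
  exact: measurable_indic.
- by rewrite lee_fin mulr_ge0 // indicE.
Qed.

Lemma measurable_sum_indic (m : nat) (c : 'I_m -> R) (B : 'I_m -> set T) :
  (forall i, measurable (B i)) ->
  measurable_fun setT (fun t => \sum_(i < m) c i * \1_(B i) t).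
Proof.
move=> mB; apply: measurable_sum => i.
by apply: measurable_funM; [exact: measurable_cst | exact: measurable_indic].
Qed.

End integral_indic_sum.

Section independent_indic_sum.
Context d (T : measurableType d) (R : realType) (P : probability T R).
Variables (n : nat) (X : nat -> {RV P >-> R}).
Hypotheses (n_gt0 : (0 < n)%N) (X_indep : mutually_independent n X)
  (X_id : identically_distributed n X).

Lemma probability_bigcap_preimage (B : 'I_n -> set R) : (forall k, measurable (B k)) ->
  P (\bigcap_(k in [set k | k \in [set: 'I_n]%SET]) X k @^-1` B k) =
  (\prod_(k < n) P (X 0%N @^-1` B k))%E.
Proof.
move=> mB; rewrite X_indep // (eq_bigl xpredT) => [|k]; last by rewrite inE.
by apply: eq_bigr => k _; exact: (X_id k (Ordinal n_gt0)).
Qed.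

Lemma expectation_prod_indic_sum (m : nat) (c : 'I_m -> R) (B : 'I_m -> set R) :
  (forall i, 0 <= c i) -> (forall i, measurable (B i)) ->
  (\int[P]_t (\prod_(k < n) \sum_(i < m) c i * \1_(B i) (X k t))%:E =
   (\int[P]_t (\sum_(i < m) c i * \1_(B i) (X 0%N t))%:E) ^+ n)%E.
Proof.
move=> c0 mB; have mXB k i : measurable (X k @^-1` B i).
  by rewrite -[_ @^-1` _]setTI; exact: measurable_funP.
pose C (f : {ffun 'I_n -> 'I_m}) :=
  \bigcap_(k in [set k | k \in [set: 'I_n]%SET]) X k @^-1` B (f k).
have mC f : measurable (C f).
  by apply: fin_bigcap_measurable => [|k _]; [exact: finite_finset | exact: mXB].
have expand t : \prod_(k < n) \sum_(i < m) c i * \1_(B i) (X k t) =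
    \sum_(f : {ffun 'I_n -> 'I_m}) (\prod_(k < n) c (f k)) * \1_(C f) t.
  by rewrite bigA_distr_bigA; apply: eq_bigr => f _; rewrite big_split /= -prodr_indic.
pose p i := fine (P (X 0%N @^-1` B i)).
have pE i : P (X 0%N @^-1` B i) = (p i)%:E by rewrite fineK // fin_num_measure.
under eq_integral do rewrite expand.
rewrite ge0_integral_sum_indic // => [|f]; last by apply: prodr_ge0.
rewrite (@ge0_integral_sum_indic _ _ _ _ _ _ _ (fun i => X 0%N @^-1` B i)) //.
have PC f : P (C f) = (\prod_(k < n) p (f k))%:E.
  by rewrite probability_bigcap_preimage // -prodEFin; apply: eq_bigr => k _.
transitivity (\sum_(f : {ffun 'I_n -> 'I_m})
  ((\prod_(k < n) c (f k)) * \prod_(k < n) p (f k))%:E)%E.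
  by apply: eq_bigr => f _; rewrite EFinM; congr (_ * _)%E; exact: PC.
rewrite (eq_bigr (fun i => (c i * p i)%:E)) => [|i _]; last first.
  by rewrite EFinM; congr (_ * _)%E; exact: pE.
rewrite !sumEFin -EFin_expe -[in RHS](card_ord n) -prodr_const bigA_distr_bigA /=.
by congr (_%:E); apply: eq_bigr => f _; rewrite big_split.
Qed.

End independent_indic_sum.

Section q_chernoff.
Context d (T : measurableType d) (R : realType) (P : probability T R).
Variables (q a : R) (n : nat) (X : nat -> {RV P >-> R}).
Hypotheses (q_lt1 : q < 1) (a_gt0 : 0 < a) (n_gt0 : (0 < n)%N)
  (X_indep : mutually_independent n X) (X_id : identically_distributed n X)
  (X_ge0 : forall k t, (k < n)%N -> 0 <= X k t).

Lemma measurable_mean_ge (x : R) :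
  measurable [set t | (x <= n%:R^-1 * \sum_(k < n) X k t)%R].
Proof.
rewrite -[A in measurable A]setTI.
apply: (_ : measurable_fun setT _) measurableT _ (measurable_ge x).
apply: measurable_funM; first exact: measurable_cst.
by apply: measurable_sum => k; exact: measurable_funP.
Qed.

Lemma qexp_chernoff_mesh (x δ : R) : 0 < δ -> δ <= x ->
  (P [set t | (x <= n%:R^-1 * \sum_(k < n) X k t)%R] *
     (qexp q (a * (n%:R * x - n%:R * δ)))%:E <=
   (\int[P]_t (qexp q (a * X 0%N t))%:E) ^+ n)%E.
Proof.
move=> δ0 δx; set E := [set t | _].
set N := (Num.truncn (n%:R * x / δ)).+1.
have nxN : n%:R * x < N%:R * δ by rewrite -ltr_pdivrMr // truncnS_gt.
pose f y := qexp q (a * y).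
have f_mono u v : 0 <= u -> u <= v -> f u <= f v.
  by move=> u0 uv; rewrite /f qexp_le // ?mulr_ge0 ?ler_wpM2l // ltW.
have c0 i : 0 <= stair_incr δ f i by apply: stair_incr_ge0 => //; exact: qexp_ge0.
pose h y := \sum_(i < N.+1) stair_incr δ f i * \1_[set z | i%:R * δ <= z] y.
have h_ge0 y : 0 <= h y by apply: sumr_ge0 => i _; rewrite mulr_ge0 // indicE.
have hE y : 0 <= y -> h y = f (stair δ N y) by move=> y0; rewrite stair_indicE.
have mh : measurable_fun setT h by apply: measurable_sum_indic => i; exact: measurable_ge.
have mE : measurable E by exact: measurable_mean_ge.
rewrite muleC -ge0_integralZ_indic ?qexp_ge0 //.
apply: (@le_trans _ _ (\int[P]_t (\prod_(k < n) h (X k t))%:E)%E).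
  apply: ge0_le_integral => //.
  - by move=> t _; rewrite lee_fin mulr_ge0 ?qexp_ge0 // indicE.
  - apply/measurable_EFinP; apply: measurable_funM; first exact: measurable_cst.
    exact: measurable_indic.
  - apply/measurable_EFinP; apply: measurable_prod => k _.
    exact: measurableT_comp mh (measurable_funP _).
  move=> t _; rewrite lee_fin indicE.
  have [Et|nEt] := pselect (E t); last first.
    by rewrite memNset // mulr0; apply: prodr_ge0.
  rewrite mem_set // mulr1 (eq_bigr (fun k : 'I_n => f (stair δ N (X k t)))).
    have nδx : n%:R * δ <= n%:R * x by rewrite ler_pM2l ?ltr0n.
    have Xt0 (k : 'I_n) : 0 <= X k t by exact: X_ge0.
    have nxS : n%:R * x <= \sum_(k < n) X k t.
      by move: Et; rewrite /E /= ler_pdivlMl ?ltr0n.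
    exact: (qexp_le_prod_stair (Y := fun k => X k t)).
  by move=> k _; rewrite hE // X_ge0.
rewrite expectation_prod_indic_sum //; last by move=> i; exact: measurable_ge.
apply: leeXn2r; first by apply: integral_ge0 => t _; rewrite lee_fin h_ge0.
apply: ge0_le_integral => //.
- by move=> t _; rewrite lee_fin h_ge0.
- by apply/measurable_EFinP; exact: measurableT_comp mh (measurable_funP _).
- apply/measurable_EFinP; apply: (measurableT_comp (measurable_powR _)) => /=.
  apply: measurable_funD; first exact: measurable_cst.
  apply: measurable_funM; first exact: measurable_cst.
  by apply: measurable_funM; [exact: measurable_cst | exact: measurable_funP].
move=> t _; have Xt0 := X_ge0 t n_gt0.
by rewrite lee_fin [X in X <= _]hE // f_mono ?stair_ge0 ?stair_le.
Qed.

Lemma qexp_chernoff (x : R) : 0 < x ->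
  ((qexp q (a * (n%:R * x)))%:E * P [set t | (x <= n%:R^-1 * \sum_(k < n) X k t)%R] <=
   (\int[P]_t (qexp q (a * X 0%N t))%:E) ^+ n)%E.
Proof.
move=> x_gt0; set E := [set t | _]; set B := (_ ^+ n)%E.
have mE : measurable E by exact: measurable_mean_ge.
have an_gt0 : 0 < a * n%:R by rewrite mulr_gt0 ?ltr0n.
have B0 : (0 <= B)%E.
  by rewrite expe_ge0 // integral_ge0 // => t _; rewrite lee_fin qexp_ge0.
have bound δ : 0 < δ -> δ <= x ->
    (P E * (qexp q (a * (n%:R * x - n%:R * δ)))%:E <= B)%E.
  by move=> δ_gt0 δx; exact: qexp_chernoff_mesh.
clearbody B; case: B B0 bound => [b| |] // b_ge0 bound; last exact: leey.
rewrite -(@fineK _ (P E)) ?fin_num_measure //.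
rewrite -EFinM lee_fin mulrC.
apply: mulr_qexp_le_shift => //.
- exact: fine_ge0.
- by rewrite !mulr_gt0 ?ltr0n.
move=> v v_gt0 v_le; pose δ := v / (a * n%:R).
have -> : a * (n%:R * x) - v = a * (n%:R * x - n%:R * δ).
  by rewrite /δ; field; rewrite pnatr_eq0 -lt0n n_gt0 gt_eqF.
rewrite -lee_fin EFinM fineK ?fin_num_measure //; apply: bound.
- by rewrite divr_gt0.
- by rewrite /δ ler_pdivrMr // (mulrC x) -mulrA.
Qed.

End q_chernoff.

Theorem proposition7 (d : measure_display) (T : measurableType d)
  (R : realType) (P : probability T R) (q : R) (n : nat)
  (X : nat -> {RV P >-> R}) :
  0 < q < 1 -> (0 < n)%N ->
  @mutually_independent _ _ _ P n X ->
  @identically_distributed _ _ _ P n X ->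
  (forall k t, (k < n)%N -> 0 < X k t) ->
  forall x a : R, 0 < x -> 0 < a ->
  (P [set t | (x <= n%:R^-1 * \sum_(k < n) X k t)%R] <=
   expq (2 - q) (- (a * n%:R * x)) *
   (\int[P]_t expq q (a * X 0%N t)) ^+ n)%E.
Proof.
(* The bound holds for every q < 1. *)
move=> /andP[_ q_lt1] n_gt0 X_indep X_id X_gt0 x a x_gt0 a_gt0.
have X_ge0 k t : (k < n)%N -> 0 <= X k t by move/X_gt0/ltW.
have anx_ge0 : 0 <= a * n%:R * x by rewrite !mulr_ge0 // ltW.
have aX_ge0 t : 0 <= a * X 0%N t by rewrite mulr_ge0 ?X_ge0 // ltW.
rewrite (expq_dualE q_lt1 anx_ge0) -mulrA.
under eq_integral => t _ do rewrite (expqE q_lt1 (aX_ge0 t)).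
rewrite lee_pdivlMl; first exact: qexp_chernoff.
by apply: lt_le_trans (qexp_ge1 q_lt1 _); rewrite ?mulr_ge0 ?ltW ?ltr0n.
Qed.
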